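(* Let $D$ be a division algebra and let $\sigma_1,\ldots,\sigma_n$ be pairwise commuting automorphisms of $D$. If the tuple $(\sigma_1,\ldots,\sigma_n)$ is not automorphically normalizable over $D$, then for any positive integers $d_1,\ldots,d_n$ the tuple $(\sigma_1^{d_1},\ldots,\sigma_n^{d_n})$ is also not automorphically normalizable over $D$.
   Context: All rings are associative with unity. For commuting automorphisms $\tau_1,\ldots,\tau_n$ of $D$, $D[t_1,\ldots,t_n;\tau_1,\ldots,\tau_n]$ is the skew polynomial ring in pairwise commuting variables with $t_ia=\tau_i(a)t_i$ for $a\in D$. For a ring $S\supseteq D$, $a\in S$ is automorphic over $D$ with respect to $\tau$ if $ab=\tau(b)a$ for all $b\in D$. Commuting $a_1,\ldots,a_m\in S$ are (left) algebraically independent over $D$ if monomials in them are left linearly independent over $D$. $S$ is automorphically normalizable over $D$ if there exist $m\ge0$ and commuting $a_1,\ldots,a_m\in S$, automorphic over $D$ with respect to pairwise commuting automorphisms, left algebraically independent over $D$, such that $S$ is finitely generated as a left module over the subring $D[a_1,\ldots,a_m]$ generated by $D\cup\{a_1,\ldots,a_m\}$. A tuple $(\tau_1,\ldots,\tau_n)$ of commuting automorphisms is automorphically normalizable over $D$ if every quotient of $D[t_1,\ldots,t_n;\tau_1,\ldots,\tau_n]$ by a proper two-sided ideal is automorphically normalizable over $D$. *)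

From HB Require Import structures.
From mathcomp Require Import all_boot all_order all_algebra.
Set Implicit Arguments. Unset Strict Implicit. Unset Printing Implicit Defensive.
Import GRing.Theory.
Local Open Scope ring_scope.

Definition is_division_ring (D : unitRingType) : Prop :=
  forall x : D, x != 0 -> x \is a GRing.unit.

Definition monom (S : nzRingType) (m : nat) (a : 'I_m -> S)
  (alpha : {ffun 'I_m -> nat}) : S :=
  \prod_(i < m) a i ^+ alpha i.

Definition automorphic (D : unitRingType) (S : nzRingType) (phi : D -> S)
  (tau : D -> D) (a : S) : Prop :=
  forall b : D, a * phi b = phi (tau b) * a.

Definition left_alg_indep (D : unitRingType) (S : nzRingType) (phi : D -> S)
  (m : nat) (a : 'I_m -> S) : Prop :=
  forall s : seq ({ffun 'I_m -> nat} * D),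
    uniq (map fst s) ->
    \sum_(p <- s) phi p.2 * monom a p.1 = 0 ->
    all (fun p => p.2 == 0) s.

Definition in_gen_subring (D : unitRingType) (S : nzRingType) (phi : D -> S)
  (m : nat) (a : 'I_m -> S) (x : S) : Prop :=
  forall P : S -> Prop,
    P 1 ->
    (forall u v, P u -> P v -> P (u - v)) ->
    (forall u v, P u -> P v -> P (u * v)) ->
    (forall d, P (phi d)) ->
    (forall i, P (a i)) ->
    P x.

Definition aut_normalizable (D : unitRingType) (S : nzRingType) (phi : D -> S)
  : Prop :=
  exists (m : nat) (a : 'I_m -> S) (tau : 'I_m -> {rmorphism D -> D}),
    (forall i, bijective (tau i)) /\
    (forall i j, (tau i) \o (tau j) =1 (tau j) \o (tau i)) /\
    (forall i j, a i * a j = a j * a i) /\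
    (forall i, automorphic phi (tau i) (a i)) /\
    left_alg_indep phi a /\
    exists (k : nat) (b : 'I_k -> S),
      forall s : S, exists c : 'I_k -> S,
        (forall j, in_gen_subring phi a (c j)) /\
        s = \sum_(j < k) c j * b j.

(* (R, iota, t) is the skew polynomial ring D[t_1..t_n; tau_1..tau_n]:
   pairwise commuting variables, t_i a = tau_i(a) t_i, and the monomials
   form a basis of R as a left D-module. *)
Definition is_skew_poly_ring (D : unitRingType) (n : nat) (tau : 'I_n -> D -> D)
  (R : nzRingType) (iota : {rmorphism D -> R}) (t : 'I_n -> R) : Prop :=
  [/\ (forall i j, t i * t j = t j * t i),
      (forall i (x : D), t i * iota x = iota (tau i x) * t i),
      (forall r : R, exists s : seq ({ffun 'I_n -> nat} * D),
          r = \sum_(p <- s) iota p.2 * monom t p.1) &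
      left_alg_indep iota t].

(* The tuple tau is automorphically normalizable over D: every quotient of
   D[t;tau] by a proper two-sided ideal (= every surjective ring morphism onto
   a nonzero ring) is automorphically normalizable over D. *)
Definition tuple_aut_normalizable (D : unitRingType) (n : nat)
  (tau : 'I_n -> D -> D) : Prop :=
  forall (R : nzRingType) (iota : {rmorphism D -> R}) (t : 'I_n -> R),
    is_skew_poly_ring tau iota t ->
    forall (S : nzRingType) (f : {rmorphism R -> S}),
      (forall y : S, exists x : R, f x = y) ->
      aut_normalizable (f \o iota).

(* Write R = D[t; sigma].  The powers u_i = t_i^(d_i) commute and satisfy
   u_i a = sigma_i^(d_i)(a) u_i, and the left D-span R' of their monomials is a
   subring which is a skew polynomial ring D[u; sigma^d], its monomials being
   monomials in t.  Dividing exponents by d shows that R is generated as a left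
   R'-module by the finitely many t^beta with beta_i < d_i.  So for a nonzero
   quotient S of R, the image S' of R' is a quotient of D[u; sigma^d] over which
   S is finite; if S' is finite over some D[a_1, ..., a_m] with generators
   b_j, then S is finite over it with generators b_j t^beta.  Thus
   normalizability of sigma^d implies that of sigma. *)

From HB Require Import structures.
From mathcomp Require Import all_boot all_order all_algebra.
From mathcomp Require Import boolp.
Set Implicit Arguments. Unset Strict Implicit. Unset Printing Implicit Defensive.
Import GRing.Theory.
Local Open Scope ring_scope.

Lemma rmorph_monom (S S' : nzRingType) (h : {rmorphism S -> S'}) m
    (a : 'I_m -> S) alpha :
  h (monom a alpha) = monom (h \o a) alpha.
Proof. by rewrite rmorph_prod; apply: eq_bigr => i _; rewrite rmorphXn. Qed.

Section Monomials.
Variables (S : nzRingType) (m : nat) (a : 'I_m -> S).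

Lemma monom0 : monom a [ffun=> 0%N] = 1.
Proof. by rewrite /monom big1 // => i _; rewrite ffunE expr0. Qed.

Lemma monom_delta i : monom a [ffun j => nat_of_bool (j == i)] = a i.
Proof.
rewrite /monom (eq_bigr (fun j => a i ^+ (j == i))) => [|j _]; last first.
  by rewrite ffunE; case: eqP => [->|].
by rewrite prodrXr (bigD1 i) //= big1 => [|j /negbTE ->]; rewrite ?eqxx ?addn0.
Qed.

Lemma monom_exprM (e : 'I_m -> nat) (alpha : {ffun 'I_m -> nat}) :
  monom (fun i => a i ^+ e i) alpha = monom a [ffun i => (e i * alpha i)%N].
Proof. by apply: eq_bigr => i _; rewrite ffunE exprM. Qed.

Hypothesis a_comm : forall i j, a i * a j = a j * a i.

Lemma monomD (alpha beta : {ffun 'I_m -> nat}) :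
  monom a [ffun i => (alpha i + beta i)%N] = monom a alpha * monom a beta.
Proof.
rewrite /monom -prodrM_comm => [|i j _ _]; last first.
  exact/commr_sym/commrX/commr_sym/commrX/a_comm.
by apply: eq_bigr => i _; rewrite ffunE exprD.
Qed.

Lemma monom_divmod (e : 'I_m -> nat) (alpha : {ffun 'I_m -> nat}) :
  monom a alpha = monom (fun i => a i ^+ e i) [ffun i => (alpha i %/ e i)%N]
                  * monom a [ffun i => (alpha i %% e i)%N].
Proof.
rewrite monom_exprM -monomD; congr (monom _ _); apply/ffunP => i.
by rewrite !ffunE mulnC -divn_eq.
Qed.

End Monomials.

Section SkewMonomials.
Variables (D : unitRingType) (R : nzRingType) (iota : {rmorphism D -> R}).
Variables (n : nat) (tau : 'I_n -> D -> D) (t : 'I_n -> R).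
Hypothesis t_comm : forall i j, t i * t j = t j * t i.
Hypothesis t_skew : forall i x, t i * iota x = iota (tau i x) * t i.

Lemma expr_skew i k x : t i ^+ k * iota x = iota (iter k (tau i) x) * t i ^+ k.
Proof.
elim: k => [|k IHk]; first by rewrite !expr0 mul1r mulr1.
by rewrite exprS -mulrA IHk mulrA t_skew /= -mulrA -exprS.
Qed.

Lemma monom_skew alpha x : exists y, monom t alpha * iota x = iota y * monom t alpha.
Proof.
suff prod_skew r : exists y,
    \prod_(i <- r) t i ^+ alpha i * iota x = iota y * \prod_(i <- r) t i ^+ alpha i.
  exact: prod_skew.
elim: r => [|i r [y IHr]]; first by exists x; rewrite !big_nil mul1r mulr1.
exists (iter (alpha i) (tau i) y).
by rewrite !big_cons -mulrA IHr mulrA expr_skew -mulrA.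
Qed.

Definition left_span (x : R) : Prop :=
  exists s : seq ({ffun 'I_n -> nat} * D), x = \sum_(p <- s) iota p.2 * monom t p.1.

Lemma left_span_term x alpha : left_span (iota x * monom t alpha).
Proof. by exists [:: (alpha, x)]; rewrite big_seq1. Qed.

Lemma left_span_iota x : left_span (iota x).
Proof. by rewrite -[iota x]mulr1 -(monom0 t); apply: left_span_term. Qed.

Lemma left_span1 : left_span 1.
Proof. by rewrite -(rmorph1 iota); apply: left_span_iota. Qed.

Lemma left_spanD x y : left_span x -> left_span y -> left_span (x + y).
Proof. by move=> [s ->] [s' ->]; exists (s ++ s'); rewrite big_cat. Qed.

Lemma left_spanN x : left_span x -> left_span (- x).
Proof.
move=> [s ->]; exists [seq (p.1, - p.2) | p <- s].
by rewrite big_map -sumrN; apply: eq_bigr => p _; rewrite rmorphN mulNr.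
Qed.

Lemma left_spanB x y : left_span x -> left_span y -> left_span (x - y).
Proof. by move=> Sx /left_spanN; apply: left_spanD. Qed.

Lemma left_span_sum I (r : seq I) (F : I -> R) :
  (forall i, left_span (F i)) -> left_span (\sum_(i <- r) F i).
Proof.
move=> SF; apply: big_ind => //; last exact: left_spanD.
by exists [::]; rewrite big_nil.
Qed.

Lemma left_spanM x y : left_span x -> left_span y -> left_span (x * y).
Proof.
move=> [s ->] [s' ->]; rewrite mulr_suml; apply: left_span_sum => p.
rewrite mulr_sumr; apply: left_span_sum => q.
have [z skew_z] := monom_skew p.1 q.2.
rewrite mulrA -(mulrA (iota p.2)) skew_z mulrA -rmorphM -mulrA -monomD //.
exact: left_span_term.
Qed.

End SkewMonomials.

(* Membership is bundled with its closure proofs so that [subring C] below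
   carries a canonical ring structure. *)
Record subring_pred (R : nzRingType) := SubringPred {
  subring_mem :> R -> Prop;
  subring_mem1 : subring_mem 1;
  subring_memB : forall x y, subring_mem x -> subring_mem y -> subring_mem (x - y);
  subring_memM : forall x y, subring_mem x -> subring_mem y -> subring_mem (x * y) }.

Section Subring.
Variables (R : nzRingType) (C : subring_pred R).

Definition subring_memb : pred R := fun x => `[< C x >].

Lemma subring_memb_closed : subring_closed subring_memb.
Proof.
split=> [|x y /asboolP Cx /asboolP Cy|x y /asboolP Cx /asboolP Cy]; apply/asboolP.
- exact: subring_mem1.
- exact: subring_memB.
- exact: subring_memM.
Qed.

Record subring := Subring { subring_val : R; _ : subring_memb subring_val }.
HB.instance Definition _ := [isSub for subring_val].
HB.instance Definition _ := [Choice of subring by <:].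
HB.instance Definition _ :=
  GRing.SubChoice_isSubNzRing.Build R subring_memb subring subring_memb_closed.

Lemma subring_valP (x : subring) : C (val x).
Proof. by apply/asboolP; case: x. Qed.

Definition in_subring x (Cx : C x) : subring := Subring (asboolT Cx).

Section Corestriction.
Variables (A : nzRingType) (g : {rmorphism A -> R}) (gC : forall x, C (g x)).

Definition corestr (x : A) : subring := in_subring (gC x).

Lemma corestr_zmod : zmod_morphism corestr.
Proof. by move=> x y; apply: val_inj; rewrite [RHS]rmorphB /= rmorphB. Qed.

Lemma corestr_monoid : monoid_morphism corestr.
Proof.
split=> [|x y]; apply: val_inj; first by rewrite [RHS]rmorph1 /= rmorph1.
by rewrite [RHS]rmorphM /= rmorphM.
Qed.

HB.instance Definition _ := GRing.isZmodMorphism.Build A subring corestr corestr_zmod.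
HB.instance Definition _ := GRing.isMonoidMorphism.Build A subring corestr corestr_monoid.

End Corestriction.
End Subring.

Section Image.
Variables (A S : nzRingType) (g : {rmorphism A -> S}).

Definition in_image (y : S) : Prop := exists x, g x = y.

Lemma in_image1 : in_image 1.
Proof. by exists 1; rewrite rmorph1. Qed.

Lemma in_imageB y z : in_image y -> in_image z -> in_image (y - z).
Proof. by move=> [x <-] [x' <-]; exists (x - x'); rewrite rmorphB. Qed.

Lemma in_imageM y z : in_image y -> in_image z -> in_image (y * z).
Proof. by move=> [x <-] [x' <-]; exists (x * x'); rewrite rmorphM. Qed.

Definition image_pred : subring_pred S := SubringPred in_image1 in_imageB in_imageM.

Lemma image_pred_rmorph x : image_pred (g x).
Proof. by exists x. Qed.

Definition image_corestr : {rmorphism A -> subring image_pred} :=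
  corestr image_pred_rmorph.

Lemma image_corestr_surj (y : subring image_pred) : exists x, image_corestr x = y.
Proof. by have [x gx] := subring_valP y; exists x; apply: val_inj. Qed.

End Image.

Lemma in_gen_subring_rmorph (D : unitRingType) (S S' : nzRingType)
    (h : {rmorphism S -> S'}) (phi : D -> S) m (a : 'I_m -> S) x :
  in_gen_subring phi a x -> in_gen_subring (h \o phi) (h \o a) (h x).
Proof.
move=> gen_x P P1 PB PM Pphi Pa; apply: (gen_x (fun y => P (h y))) => //.
- by rewrite rmorph1.
- by move=> y z Py Pz; rewrite rmorphB; apply: PB.
- by move=> y z Py Pz; rewrite rmorphM; apply: PM.
Qed.

Lemma sum_regroup (S' S : nzRingType) (h : {rmorphism S' -> S}) (T : finType)
    (g : T -> S) (s : seq (S' * T)) :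
  \sum_(p <- s) h p.1 * g p.2 = \sum_(j : T) h (\sum_(p <- s | p.2 == j) p.1) * g j.
Proof.
rewrite (partition_big snd xpredT) //; apply: eq_bigr => j _.
by rewrite rmorph_sum mulr_suml; apply: eq_big => // p /eqP ->.
Qed.

Lemma ord_generators (S : nzRingType) (Q : S -> Prop) (T : finType) (g : T -> S) :
  (forall x, exists c : T -> S, (forall j, Q (c j)) /\ x = \sum_j c j * g j) ->
  exists k (b : 'I_k -> S), forall x, exists c : 'I_k -> S,
    (forall j, Q (c j)) /\ x = \sum_(j < k) c j * b j.
Proof.
move=> gen; exists #|T|, (fun j => g (enum_val j)) => x.
have [c [Qc ->]] := gen x; exists (fun j => c (enum_val j)); split=> [j|].
  exact: Qc.
by rewrite -(big_enum_val (A := T) (fun j => c j * g j)).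
Qed.

Lemma aut_normalizable_fin_ext (D : unitRingType) (S' S : nzRingType)
    (h : {rmorphism S' -> S}) (phi : D -> S') (T : finType) (g : T -> S) :
  injective h ->
  (forall x : S, exists s : seq (S' * T), x = \sum_(p <- s) h p.1 * g p.2) ->
  aut_normalizable phi -> aut_normalizable (h \o phi).
Proof.
move=> h_inj S_gen [m [a [tau [tau_bij [tau_comm [a_comm [a_aut [a_indep]]]]]]]].
move=> [k [b b_gen]].
exists m, (h \o a), tau; do 2!split=> //; split; [|split; [|split]].
- by move=> i j; rewrite /= -!rmorphM a_comm.
- by move=> i x; rewrite /= -!rmorphM a_aut.
- move=> s s_uniq s0; apply: a_indep => //; apply: h_inj.
  rewrite rmorph0 -s0 rmorph_sum; apply: eq_bigr => p _.
  by rewrite rmorphM rmorph_monom.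
apply: (@ord_generators _ _ _ (fun jl : 'I_k * T => h (b jl.1) * g jl.2)) => x.
have [s ->] := S_gen x; rewrite sum_regroup.
have /fin_all_exists [e e_gen] : forall l : T, exists c : 'I_k -> S',
    (forall j, in_gen_subring phi a (c j)) /\
    \sum_(p <- s | p.2 == l) p.1 = \sum_(j < k) c j * b j := fun l => b_gen _.
exists (fun jl => h (e jl.2 jl.1)); split=> [[j l]|].
  exact: in_gen_subring_rmorph ((e_gen l).1 j).
rewrite -(pair_bigA _ (fun j l => h (e l j) * (h (b j) * g l))) exchange_big /=.
apply: eq_bigr => l _.
rewrite (e_gen l).2 rmorph_sum mulr_suml; apply: eq_bigr => j _.
by rewrite rmorphM mulrA.
Qed.

Section PowerSubring.
Variables (D : unitRingType) (R : nzRingType) (iota : {rmorphism D -> R}).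
Variables (n : nat) (tau : 'I_n -> D -> D) (t : 'I_n -> R) (d : 'I_n -> nat).
Hypothesis t_comm : forall i j, t i * t j = t j * t i.
Hypothesis t_skew : forall i x, t i * iota x = iota (tau i x) * t i.

Let u i := t i ^+ d i.

Lemma pow_comm i j : u i * u j = u j * u i.
Proof. exact/commrX/commr_sym/commrX/t_comm. Qed.

Lemma pow_skew i x : u i * iota x = iota (iter (d i) (tau i) x) * u i.
Proof. exact: expr_skew. Qed.

Definition pow_subring_pred : subring_pred R :=
  SubringPred (left_span1 iota u) (@left_spanB _ _ iota _ u)
    (left_spanM pow_comm pow_skew).

Definition pow_subring := subring pow_subring_pred.

Lemma pow_iota_mem x : pow_subring_pred (iota x).
Proof. exact: left_span_iota. Qed.

Definition pow_iota : {rmorphism D -> pow_subring} := corestr pow_iota_mem.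

Lemma pow_term_mem x alpha : pow_subring_pred (iota x * monom u alpha).
Proof. exact: left_span_term. Qed.

Lemma pow_var_mem i : pow_subring_pred (u i).
Proof.
have := pow_term_mem 1 [ffun j => nat_of_bool (j == i)].
by rewrite rmorph1 mul1r monom_delta.
Qed.

Definition pow_var i : pow_subring := in_subring (pow_var_mem i).

Hypothesis d_gt0 : forall i, (0 < d i)%N.

Lemma pow_subring_skew :
  left_alg_indep iota t ->
  is_skew_poly_ring (fun i => iter (d i) (tau i)) pow_iota pow_var.
Proof.
move=> t_indep; split.
- by move=> i j; apply: val_inj; rewrite !rmorphM /= pow_comm.
- by move=> i x; apply: val_inj; rewrite !rmorphM /= pow_skew.
- move=> r; have [s s_r] := subring_valP r; exists s; apply: val_inj.
  by rewrite s_r rmorph_sum; apply: eq_bigr => p _; rewrite rmorphM rmorph_monom.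
move=> s s_uniq s0.
pose scale (alpha : {ffun 'I_n -> nat}) := [ffun i => (d i * alpha i)%N].
have scale_inj : injective scale.
  move=> alpha beta /ffunP eq_ab; apply/ffunP => i.
  by have /eqP := eq_ab i; rewrite !ffunE eqn_pmul2l // => /eqP.
have := t_indep [seq (scale p.1, p.2) | p <- s].
rewrite all_map; apply; first by rewrite -map_comp (map_comp _ fst) map_inj_uniq.
rewrite big_map -[RHS](rmorph0 (val : pow_subring -> R)) -s0 rmorph_sum.
apply: eq_bigr => p _.
by rewrite rmorphM rmorph_monom /= monom_exprM.
Qed.

Definition pow_remainders := {dffun forall i : 'I_n, 'I_(d i)}.

Definition remainder_monom (beta : pow_remainders) : R :=
  monom t [ffun i => nat_of_ord (beta i)].

Lemma pow_subring_fin_gen r :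
  (exists s, r = \sum_(p <- s) iota p.2 * monom t p.1) ->
  exists s : seq (pow_subring * pow_remainders),
    r = \sum_(p <- s) val p.1 * remainder_monom p.2.
Proof.
move=> [s ->].
pose quo (alpha : {ffun 'I_n -> nat}) := [ffun i => (alpha i %/ d i)%N].
pose rem (alpha : {ffun 'I_n -> nat}) : pow_remainders :=
  [ffun i => Ordinal (ltn_pmod (alpha i) (d_gt0 i))].
exists [seq (in_subring (pow_term_mem p.2 (quo p.1)), rem p.1) | p <- s].
rewrite big_map; apply: eq_bigr => p _ /=.
rewrite (monom_divmod t_comm d) mulrA /remainder_monom; congr (_ * monom _ _).
by apply/ffunP => i; rewrite !ffunE.
Qed.

End PowerSubring.

Unset Implicit Arguments.
Set Strict Implicit.

Theorem proposition5p1 (D : unitRingType) (Ddiv : is_division_ring D)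
  (n : nat) (sigma : 'I_n -> {rmorphism D -> D})
  (sigma_bij : forall i, bijective (sigma i))
  (sigma_comm : forall i j, (sigma i) \o (sigma j) =1 (sigma j) \o (sigma i)) :
  ~ tuple_aut_normalizable (fun i => (sigma i : D -> D)) ->
  forall d : 'I_n -> nat, (forall i, (0 < d i)%N) ->
  ~ tuple_aut_normalizable (fun i => iter (d i) (sigma i)).
Proof.
move=> not_normalizable d d_gt0 pow_normalizable.
apply: not_normalizable => R iota t [t_comm t_skew t_span t_indep] S f f_surj.
pose f' := image_corestr (f \o val : {rmorphism pow_subring d t_comm t_skew -> S}).
have := pow_normalizable _ _ _ (pow_subring_skew t_comm t_skew d_gt0 t_indep) _ f'
  (@image_corestr_surj _ _ _).
(* [val \o (f' \o pow_iota)] computes to [f \o iota]. *)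
apply: (aut_normalizable_fin_ext (g := f \o remainder_monom t (d := d)) val_inj) => x.
have [r <-] := f_surj x.
have [s ->] := pow_subring_fin_gen t_comm t_skew d_gt0 (t_span r).
exists [seq (f' p.1, p.2) | p <- s]; rewrite rmorph_sum big_map.
by apply: eq_bigr => p _; rewrite rmorphM.
Qed.
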